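(* Let $(\mathcal{N},r)$ be a ranked $X$-cactus. Then $\mathcal{S}_i(\mathcal{N})$ is a polestar system on $X$ for every $0\le i\le\sigma(r)$.
   Context: Let $X$ be a finite non-empty set. A rooted DAG $N=(V,A)$ is a finite directed acyclic graph with a vertex $\rho$ of indegree $0$ (the root) from which every vertex is reachable. Leaf: outdegree $0$; tree vertex: indegree $\le1$; reticulation vertex: indegree $\ge2$; if $(u,v)\in A$, $u$ is a parent of $v$. A reticulation cycle consists of two distinct directed paths with the same start and end vertex and no other common vertices. A rooted $X$-cactus $\mathcal{N}=(N,\varphi)$ is a rooted DAG with $\varphi:X\to V$ such that every vertex has indegree $\le2$, no two distinct reticulation cycles share an arc, and $\varphi(X)$ contains all leaves and all tree vertices of outdegree $1$. A time-stamp function is $t:V\to\mathbb{R}_{\ge0}$ with $t(v)=0$ for $v\in\varphi(X)$; $t(u)>t(v)$ for every arc $(u,v)$ with $v$ not a reticulation vertex; $t(v)=t(p_1)=t(p_2)$ for each reticulation vertex $v$ with parents $p_1,p_2$. Size $\sigma(t)=|t(V)|-1$. A ranking is a time-stamp function $r$ with $r(V)=\{0,\dots,\sigma(r)\}$; a ranked $X$-cactus is a rooted $X$-cactus admitting a time-stamp function, together with a ranking. A vertex $u$ is a descendant of $v$ if some directed path from the root to $u$ contains $v$; strict if every such path contains $v$, non-strict otherwise. $S(u)=\{x:\varphi(x)$ strict descendant of $u\}$, $H(u)=\{x:\varphi(x)$ non-strict descendant of $u\}$. For $0\le i\le\sigma(r)$, $V_i=\{u\in V:r(u)\le i$ and $r(p)>i$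 for all parents $p$ of $u\}$ and $\mathcal{S}_i(\mathcal{N})=\{(S(u),H(u)):u\in V_i\}\cup\{(H(u),\emptyset):u\in V_i,H(u)\ne\emptyset\}$. A set pair system on $X$ is a set of ordered pairs $(S,H)$ of subsets of $X$ with $S\ne\emptyset$, $S\cap H=\emptyset$. It is a polestar system (partition-like) if (PL1) $\mathcal{P}(\mathcal{S})=\{S:(S,H)\in\mathcal{S}\}$ is a partition of $X$; (PL2) distinct $(S,H),(S',H')\in\mathcal{S}$ have $S\ne S'$; (PL3) for each $(S,H)\in\mathcal{S}$ with $H\ne\emptyset$ we have $(H,\emptyset)\in\mathcal{S}$ and there is exactly one $(S',H')\in\mathcal{S}$ with $(S',H')\ne(S,H)$ and $H'=H$. *)

From mathcomp Require Import all_boot.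
From mathcomp Require Import boolp.
Set Implicit Arguments. Unset Strict Implicit. Unset Printing Implicit Defensive.

Section Cactus.
Variables (V X : finType).
Variable a : rel V.

Definition indeg (v : V) : nat := #|[set u | a u v]|.
Definition outdeg (v : V) : nat := #|[set w | a v w]|.
Definition is_leaf (v : V) : bool := outdeg v == 0.
Definition is_tree_vertex (v : V) : bool := indeg v <= 1.
Definition is_reticulation (v : V) : bool := 2 <= indeg v.

(* a directed path is a vertex sequence s :: p with consecutive arcs;
   it starts at s and ends at last s p *)
Definition acyclic : Prop :=
  forall (v : V) (p : seq V), path a v p -> last v p = v -> p = [::].

Definition rooted_DAG (rho : V) : Prop :=
  acyclic /\ indeg rho = 0 /\
  (forall v : V, exists p : seq V, path a rho p /\ last rho p = v).

Definition path_arcs (s : V) (p : seq V) : seq (V * V) := zip (s :: p) p.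

Definition retic_cycle (s : V) (p1 p2 : seq V) : Prop :=
  [/\ path a s p1, path a s p2, last s p1 = last s p2, p1 <> p2 &
      forall v : V, v \in s :: p1 -> v \in s :: p2 ->
        v = s \/ v = last s p1].

Definition cycle_arcs (s : V) (p1 p2 : seq V) : seq (V * V) :=
  path_arcs s p1 ++ path_arcs s p2.

(* distinct reticulation cycles (i.e. with different arc sets) share no arc *)
Definition no_shared_arc : Prop :=
  forall (s : V) (p1 p2 : seq V) (s' : V) (q1 q2 : seq V),
    retic_cycle s p1 p2 -> retic_cycle s' q1 q2 ->
    (exists e, e \in cycle_arcs s p1 p2 /\ e \in cycle_arcs s' q1 q2) ->
    cycle_arcs s p1 p2 =i cycle_arcs s' q1 q2.

Definition is_X_cactus (rho : V) (phi : X -> V) : Prop :=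
  [/\ rooted_DAG rho,
      (forall v : V, indeg v <= 2),
      no_shared_arc &
      (forall v : V, (is_leaf v || (is_tree_vertex v && (outdeg v == 1))) ->
         v \in codom phi)].

Definition sigma (r : V -> nat) : nat := (size (undup [seq r v | v <- enum V])).-1.

(* a ranking: a time-stamp function r (values in N, hence >= 0) with
   r(V) = {0, ..., sigma(r)} *)
Definition is_ranking (phi : X -> V) (r : V -> nat) : Prop :=
  [/\ (forall x : X, r (phi x) = 0),
      (forall u v : V, a u v -> ~~ is_reticulation v -> r v < r u),
      (forall u v : V, a u v -> is_reticulation v -> r u = r v) &
      (forall k : nat, (exists v : V, r v = k) <-> k <= sigma r)].

Definition root_path_to (rho u : V) (p : seq V) : Prop :=
  path a rho p /\ last rho p = u.

Definition descendant (rho u v : V) : Prop :=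
  exists p, root_path_to rho u p /\ v \in rho :: p.

Definition strict_descendant (rho u v : V) : Prop :=
  descendant rho u v /\ forall p, root_path_to rho u p -> v \in rho :: p.

Definition non_strict_descendant (rho u v : V) : Prop :=
  descendant rho u v /\ ~ strict_descendant rho u v.

Definition Sset (rho : V) (phi : X -> V) (u : V) : {set X} :=
  [set x | `[< strict_descendant rho (phi x) u >]].

Definition Hset (rho : V) (phi : X -> V) (u : V) : {set X} :=
  [set x | `[< non_strict_descendant rho (phi x) u >]].

Definition Vi (r : V -> nat) (i : nat) : {set V} :=
  [set u | (r u <= i) && [forall p, a p u ==> (i < r p)]].

Definition Sys_i (rho : V) (phi : X -> V) (r : V -> nat) (i : nat)
  : {set {set X} * {set X}} :=
  [set (Sset rho phi u, Hset rho phi u) | u in Vi r i] :|: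
  [set (Hset rho phi u, set0) | u in [set u in Vi r i | Hset rho phi u != set0]].
End Cactus.

Section Polestar.
Variable X : finType.
Definition set_pair_system (S : {set {set X} * {set X}}) : Prop :=
  forall p, p \in S -> p.1 != set0 /\ p.1 :&: p.2 = set0.

Definition polestar_system (S : {set {set X} * {set X}}) : Prop :=
  [/\ set_pair_system S,
      partition [set p.1 | p in S] [set: X],
      (forall p q, p \in S -> q \in S -> p != q -> p.1 != q.1) &
      (forall p, p \in S -> p.2 != set0 ->
         (p.2, set0) \in S /\
         exists! q, [/\ q \in S, q != p & q.2 = p.2])].
End Polestar.

From mathcomp Require Import all_boot.
From mathcomp Require Import boolp.
Set Implicit Arguments. Unset Strict Implicit. Unset Printing Implicit Defensive.

(* The vertices of V_i form a cut: every root path to a vertex of rank at most i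
   meets V_i (ranks drop strictly into tree vertices), and no vertex of V_i
   reaches another one.  Hence, calling the vertices of V_i above t the owners
   of t, x lies in S(u) iff u is the only owner of phi x, and in H(u) iff u is
   one of several owners of phi x.  Two owners of a common vertex lie, through
   their unique parent arcs, on a reticulation cycle whose top is above the cut;
   such a cycle crosses the cut in at most two arcs, and cycles sharing an arc
   coincide, so every u in V_i has at most one co-owner.  A vertex owned by u
   alone with the fewest descendants has only shared children; the same cycle
   argument shows that it is a leaf or a tree vertex of outdegree one, so it is
   labelled and S(u) is not empty.  The polestar axioms then follow from these
   properties of owners alone. *)

Lemma split_first (T : eqType) (P : pred T) (s : seq T) : has P s ->
  exists A x B, [/\ s = A ++ x :: B, P x & ~~ has P A].
Proof. by case/split_find => x A B Px nA; exists A, x, B; rewrite cat_rcons. Qed.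

Lemma split_last (T : eqType) (P : pred T) (s : seq T) : has P s ->
  exists A x B, [/\ s = A ++ x :: B, P x & ~~ has P B].
Proof.
rewrite -has_rev => /split_first [A [x [B [e Px nA]]]].
exists (rev B), x, (rev A); split => //; last by rewrite has_rev.
by rewrite -[s]revK e rev_cat rev_cons cat_rcons.
Qed.

Lemma cat_cons_eq_cat (T : eqType) (A B C D : seq T) x :
  A ++ x :: B = C ++ D -> x \notin D -> exists E, B = E ++ D /\ C = A ++ x :: E.
Proof.
elim: A C => [|y A IH] [|c C] /=.
- by move=> <-; rewrite mem_head.
- by case=> -> ->; exists C.
- by move=> <-; rewrite in_cons mem_cat mem_head !orbT.
- by case=> -> /IH /[apply] -[E [-> ->]]; exists E.
Qed.

Lemma last_cons_cat (T : Type) (x y : T) p A E :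
  x :: p = A ++ y :: E -> last x p = last y E.
Proof. by case: A => [|z A] /= [-> ->] //; rewrite last_cat. Qed.

Lemma uniq_succ (T : eqType) (s E F E' F' : seq T) y z z' :
  uniq s -> s = E ++ y :: z :: F -> s = E' ++ y :: z' :: F' -> z = z'.
Proof.
move=> s_uniq sE sE'.
have index_y G H : s = G ++ y :: H -> index y s = size G.
  move=> sG; have: y \notin G.
    by move: s_uniq; rewrite sG cat_uniq => /and3P[_ /hasPn/(_ y (mem_head _ _))].
  by rewrite sG index_cat => /negbTE-> /=; rewrite eqxx addn0.
have sizeE : size E = size E' by rewrite -(index_y _ _ sE) -(index_y _ _ sE').
have := congr1 (drop (size E)) sE'; rewrite {1}sE drop_size_cat // sizeE.
by rewrite drop_size_cat // => -[].
Qed.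

Section PathArcs.
Variable V : finType.
Implicit Types (s q v y : V) (p E F : seq V).

Lemma mem_path_arcs_mid s E y F : (last s E, y) \in path_arcs s (E ++ y :: F).
Proof. by rewrite /path_arcs; elim: E s => [|e E IH] s /=; rewrite in_cons ?eqxx ?IH ?orbT. Qed.

Lemma path_arcs_split s p q v : (q, v) \in path_arcs s p ->
  exists E F, s :: p = E ++ q :: v :: F.
Proof.
rewrite /path_arcs; elim: p s => [|z p IH] s //=; rewrite in_cons.
case/predU1P => [[-> ->]|/IH [E [F e]]]; first by exists [::], p.
by exists (s :: E), F; rewrite /= -e.
Qed.

Lemma path_arcs_to s p v : v \in s :: p -> v != s -> exists q, (q, v) \in path_arcs s p.
Proof.
rewrite /path_arcs; elim: p s => [|z p IH] s; first by rewrite mem_seq1 => /eqP->; rewrite eqxx.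
rewrite in_cons => /predU1P[->|vp]; first by rewrite eqxx.
move=> vs; have [->|vz] := eqVneq v z; first by exists s; rewrite /= mem_head.
by have [q hq] := IH z vp vz; exists q; rewrite /= in_cons hq orbT.
Qed.

Lemma mem_path_arcs_rcons x R u A A0 s B pu m :
  x :: R ++ u :: A = A0 ++ s :: B -> s \notin u :: A -> last x R = pu ->
  (pu, u) \in path_arcs s (rcons B m).
Proof.
rewrite -cat_cons => /esym /cat_cons_eq_cat /[apply] -[E [-> xR]] <-.
by rewrite (last_cons_cat xR) rcons_cat /= mem_path_arcs_mid.
Qed.

End PathArcs.

Section Paths.
Variables (V : finType) (a : rel V).
Implicit Types (s q v x y m : V) (p E G : seq V).

Lemma path_arcsP s p q v : path a s p -> (q, v) \in path_arcs s p ->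
  [/\ a q v, q \in s :: p & v \in p].
Proof.
rewrite /path_arcs; elim: p s => [|z p IH] s //= /andP[asz pz].
rewrite in_cons => /predU1P[[-> ->]|/(IH _ pz) [aqv qp vp]]; first by rewrite !mem_head.
by split; rewrite // in_cons ?qp ?vp orbT.
Qed.

Lemma path_suffix s p E x G : path a s p -> s :: p = E ++ x :: G ->
  path a x G /\ last x G = last s p.
Proof.
move=> sp; case: E => [|e E] /= [es pE]; first by subst.
by move: sp; rewrite pE cat_path last_cat /= => /andP[_ /andP[_ ->]].
Qed.

Lemma mem_path_connect x p y : path a x p -> y \in x :: p ->
  connect a x y /\ connect a y (last x p).
Proof.
move=> xp; rewrite in_cons => /predU1P[->|yp].
  by split; [exact: connect0 | apply/connectP; exists p].
case/splitPr: yp xp => E G; rewrite cat_path /= => /andP[xE /andP[Ey yG]]; split; apply/connectP.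
  by exists (rcons E y); rewrite ?rcons_path ?xE ?last_rcons.
by exists G; rewrite // last_cat.
Qed.

Lemma cycle_arcs_pred s p1 p2 y c : retic_cycle a s p1 p2 ->
  (y, c) \in cycle_arcs s p1 p2 -> y != s ->
  exists2 q, a q y & (q, y) \in cycle_arcs s p1 p2.
Proof.
case=> sp1 sp2 _ _ _; rewrite /cycle_arcs => + ys.
have pred p : path a s p -> (y, c) \in path_arcs s p ->
    exists2 q, a q y & (q, y) \in path_arcs s p.
  move=> sp /(path_arcsP sp) [_ yp _]; have [q qy] := path_arcs_to yp ys.
  by exists q => //; case: (path_arcsP sp qy).
by rewrite mem_cat => /orP[] /pred[] // q aqy qy; exists q; rewrite // mem_cat qy ?orbT.
Qed.

Lemma retic_cycle_of_parents x l1 l2 q1 q2 m :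
  path a x l1 -> last x l1 = q1 -> path a x l2 -> last x l2 = q2 ->
  a q1 m -> a q2 m -> q1 != q2 ->
  exists A s B C D, [/\ x :: l1 = A ++ s :: B, x :: l2 = C ++ s :: D,
    retic_cycle a s (rcons B m) (rcons D m),
    (q1, m) \in path_arcs s (rcons B m) & (q2, m) \in path_arcs s (rcons D m)].
Proof.
move=> xl1 <- xl2 <- a1 a2 q12.
have /split_last [A [s [B [e1 sl2 nB]]]] : has (mem (x :: l2)) (x :: l1).
  by rewrite /= mem_head.
have [C [D e2]] : exists C D, x :: l2 = C ++ s :: D.
  by case/splitPr: sl2 => C D; exists C, D.
have [sB lB] := path_suffix xl1 e1; have [sD lD] := path_suffix xl2 e2.
exists A, s, B, C, D; split => //; last 2 first.
- by rewrite -cats1 -lB mem_path_arcs_mid.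
- by rewrite -cats1 -lD mem_path_arcs_mid.
split; rewrite ?rcons_path ?sB ?sD ?lB ?lD ?a1 ?a2 ?last_rcons //.
  by move=> /rcons_inj [eBD]; move: q12; rewrite -lB -lD eBD eqxx.
move=> v; rewrite !in_cons !mem_rcons !in_cons.
case/predU1P => [->|]; first by left.
case/predU1P => [->|vB]; first by right.
case/predU1P => [->|]; first by left.
case/predU1P => [->|vD]; first by right.
have vl2 : v \in x :: l2 by rewrite e2 mem_cat in_cons vD !orbT.
by move/hasPn: nB => /(_ v vB) /negP[].
Qed.

Lemma paths_first_meet u w P P' y : path a u P -> last u P = y ->
  path a w P' -> last w P' = y -> u \notin w :: P' -> w \notin u :: P ->
  exists A C q1 q2 m, [/\ path a u A, last u A = q1, path a w C & last w C = q2] /\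
    [/\ a q1 m, a q2 m & forall z, z \in u :: A -> z \notin w :: C].
Proof.
move=> uP lP wP' lP' nu nw.
have /split_first [[|u' A] [m [B [e mP' nA]]]] : has (mem (w :: P')) (u :: P).
- by apply/hasP; exists y; [rewrite -lP | rewrite inE -lP']; apply: mem_last.
- by case: e mP' nu => -> _ mP /negP[].
case: e => eu eP; subst u'.
move: uP; rewrite eP cat_path => /andP[uA /= /andP[am _]].
have [[|w' C] [D e']] : exists C D, w :: P' = C ++ m :: D.
  by case/splitPr: mP' => C D; exists C, D.
- by case: e' nw => ->; rewrite eP in_cons mem_cat mem_head !orbT.
case: e' => ew eP'; subst w'.
move: wP'; rewrite eP' cat_path => /andP[wC /= /andP[cm _]].
exists A, C, (last u A), (last w C), m; split; split => // z zA.
apply: contra (hasPn nA z zA) => zC.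
by rewrite inE eP' -cat_cons mem_cat zC.
Qed.

Section Acyclic.
Hypothesis acyc : acyclic a.

Lemma acyclic_path_notin s p : path a s p -> s \notin p.
Proof.
apply: contraTN => /splitPr [A B]; apply/negP; rewrite cat_path => /andP[sA /andP[As _]].
have := @acyc s (rcons A s); rewrite rcons_path sA As last_rcons.
by move=> /(_ isT erefl) /eqP; rewrite -size_eq0 size_rcons.
Qed.

Lemma acyclic_path_uniq s p : path a s p -> uniq (s :: p).
Proof.
elim: p s => [|z p IH] s // sp; rewrite cons_uniq (acyclic_path_notin sp) IH //.
by case/andP: sp.
Qed.

Lemma acyclic_no_arc_from_last s p c : path a s p -> (last s p, c) \notin path_arcs s p.
Proof.
move=> sp; apply/negP => /path_arcs_split [E [F e]].
by have [/acyc] := path_suffix sp e => /[apply].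
Qed.

Lemma acyclic_path_arcs_succ s p y c1 c2 : path a s p ->
  (y, c1) \in path_arcs s p -> (y, c2) \in path_arcs s p -> c1 = c2.
Proof.
move=> sp /path_arcs_split [E [F e]] /path_arcs_split [E' [F' e']].
exact: uniq_succ (acyclic_path_uniq sp) e e'.
Qed.

Lemma retic_cycle_fork s p1 p2 y c1 c2 : retic_cycle a s p1 p2 ->
  (y, c1) \in cycle_arcs s p1 p2 -> (y, c2) \in cycle_arcs s p1 p2 -> c1 != c2 -> y = s.
Proof.
case=> sp1 sp2 l12 _ common; rewrite /cycle_arcs !mem_cat.
have inner p c : path a s p -> (y, c) \in path_arcs s p -> y \in s :: p /\ y != last s p.
  move=> sp yc; have [_ yp _] := path_arcsP sp yc; split => //.
  by apply: contraNneq (acyclic_no_arc_from_last c sp) => <-.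
have branch p c p' c' : path a s p -> path a s p' -> last s p' = last s p ->
    (y, c) \in path_arcs s p -> (y, c') \in path_arcs s p' -> (forall v, v \in s :: p ->
    v \in s :: p' -> v = s \/ v = last s p) -> y = s.
  move=> sp sp' ll yc yc' com; have [yp ny] := inner _ _ sp yc.
  have [yp' _] := inner _ _ sp' yc'.
  by case: (com y yp yp') => // yl; rewrite yl eqxx in ny.
case/orP=> yc1 /orP[] yc2 c12.
- by rewrite (acyclic_path_arcs_succ sp1 yc1 yc2) eqxx in c12.
- exact: branch sp1 sp2 (esym l12) yc1 yc2 common.
- exact: branch sp1 sp2 (esym l12) yc2 yc1 common.
- by rewrite (acyclic_path_arcs_succ sp2 yc1 yc2) eqxx in c12.
Qed.

Lemma retic_cycle_sink_no_arc s p1 p2 c : retic_cycle a s p1 p2 ->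
  (last s p1, c) \notin cycle_arcs s p1 p2.
Proof.
case=> sp1 sp2 l12 _ _; rewrite /cycle_arcs mem_cat negb_or.
by rewrite acyclic_no_arc_from_last // l12 acyclic_no_arc_from_last.
Qed.

Lemma connect_card_lt y c : a y c ->
  #|[set z | connect a c z]| < #|[set z | connect a y z]|.
Proof.
move=> ayc; apply: proper_card; apply/properP; split.
  by apply/subsetP => z; rewrite !inE; apply: connect_trans (connect1 ayc).
exists y; rewrite !inE ?connect0 //; apply/negP => /connectP [q cq yq].
by have := @acyc y (c :: q); rewrite /= ayc cq -yq => /(_ isT erefl).
Qed.

End Acyclic.
End Paths.

Section MonotoneRank.
Variables (V : finType) (a : rel V) (r : V -> nat).
Hypothesis rank_arc : forall u v, a u v -> r v <= r u.

Lemma path_rank x p y : path a x p -> y \in x :: p -> r y <= r x.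
Proof.
elim: p x => [|z p IH] x /=; first by move=> _; rewrite mem_seq1 => /eqP->.
case/andP => axz zp; rewrite in_cons => /predU1P[-> //|yp].
exact: leq_trans (IH z zp yp) (rank_arc axz).
Qed.

Lemma connect_rank x y : connect a x y -> r y <= r x.
Proof. by case/connectP => p xp ->; apply: path_rank xp (mem_last _ _). Qed.

Lemma path_rank_last x p y : path a x p -> y \in x :: p -> r (last x p) <= r y.
Proof. by move=> xp /(mem_path_connect xp) [_ /connect_rank]. Qed.

Variable i : nat.

Definition cut_arc (e : V * V) : bool := (i < r e.1) && (r e.2 <= i).

Lemma path_arcs_cut_uniq s p q v q' v' : path a s p ->
  cut_arc (q, v) -> cut_arc (q', v') ->
  (q, v) \in path_arcs s p -> (q', v') \in path_arcs s p -> v = v'.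
Proof.
rewrite /cut_arc /path_arcs /= => + /andP[qi vi] /andP[q'i v'i].
elim: p s => [|z p IH] s //= /andP[asz zp]; rewrite !in_cons.
have below q0 v0 : (q0, v0) \in zip (z :: p) p -> r q0 <= r z.
  by case/(path_arcsP zp) => _ /(path_rank zp).
case/predU1P => [[_ ev]|qv] /predU1P[[_ ev']|q'v']; first by rewrite ev ev'.
- have rz : r z <= i by rewrite -ev.
  by have := leq_trans (below _ _ q'v') rz; rewrite leqNgt q'i.
- have rz : r z <= i by rewrite -ev'.
  by have := leq_trans (below _ _ qv) rz; rewrite leqNgt qi.
- exact: IH zp qv q'v'.
Qed.

Lemma retic_cycle_cut_arcs s p1 p2 e1 e2 e3 : retic_cycle a s p1 p2 ->
  cut_arc e1 -> cut_arc e2 -> cut_arc e3 ->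
  e1 \in cycle_arcs s p1 p2 -> e2 \in cycle_arcs s p1 p2 -> e3 \in cycle_arcs s p1 p2 ->
  [\/ e1.2 = e2.2, e1.2 = e3.2 | e2.2 = e3.2].
Proof.
case: e1 e2 e3 => [q1 v1] [q2 v2] [q3 v3] [sp1 sp2 _ _ _] c1 c2 c3.
rewrite /cycle_arcs !mem_cat /=.
have uniq12 := path_arcs_cut_uniq sp1; have uniq22 := path_arcs_cut_uniq sp2.
case/orP=> m1 /orP[] m2 /orP[] m3;
  first [ by constructor 1; first [exact: uniq12 c1 c2 m1 m2 | exact: uniq22 c1 c2 m1 m2]
        | by constructor 2; first [exact: uniq12 c1 c3 m1 m3 | exact: uniq22 c1 c3 m1 m3]
        | by constructor 3; first [exact: uniq12 c2 c3 m2 m3 | exact: uniq22 c2 c3 m2 m3] ].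
Qed.

End MonotoneRank.

(* [own x] abstracts the set of owners of the vertex labelled x. *)
Section OwnerSystem.
Variables (X V : finType) (C : {set V}) (own : X -> {set V}).

Definition private_set (u : V) : {set X} := [set x | own x == [set u]].
Definition shared_set (u : V) : {set X} := [set x | (u \in own x) && (own x != [set u])].

Definition owner_system : {set {set X} * {set X}} :=
  [set (private_set u, shared_set u) | u in C] :|:
  [set (shared_set u, set0) | u in [set u in C | shared_set u != set0]].

Hypothesis own_sub : forall x, own x \subset C.
Hypothesis own_neq0 : forall x, own x != set0.
Hypothesis own_private : forall u, u \in C -> exists x, own x = [set u].
Hypothesis own_partner : forall x y u w w', u \in own x -> w \in own x ->
  u \in own y -> w' \in own y -> w != u -> w' != u -> w = w'.

Lemma shared_setP u x :
  reflect (u \in own x /\ exists2 w, w \in own x & w != u) (x \in shared_set u).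
Proof.
rewrite inE; apply: (iffP andP) => [[ux]|[ux [w wx wu]]].
  rewrite eqEsubset sub1set ux andbT => /subsetPn [w wx].
  by rewrite in_set1 => wu; split => //; exists w.
by split => //; apply/eqP => ox; move: wx; rewrite ox in_set1 (negbTE wu).
Qed.

Lemma private_set_neq0 u : u \in C -> private_set u != set0.
Proof. by case/own_private => x ox; apply/set0Pn; exists x; rewrite inE ox. Qed.

Lemma private_shared_disjoint u w x : x \in private_set u -> x \notin shared_set w.
Proof.
rewrite inE => /eqP ox; apply/shared_setP => -[].
by rewrite ox => /set1P -> [w' /set1P ->]; rewrite eqxx.
Qed.

Lemma private_set_inj u w x : x \in private_set u -> x \in private_set w -> u = w.
Proof. by rewrite !inE => /eqP -> /eqP /set1_inj. Qed.

Lemma shared_set_sub u w x : x \in shared_set u -> x \in shared_set w ->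
  shared_set u \subset shared_set w.
Proof.
move=> /shared_setP [ux _] /shared_setP [wx _]; have [-> //|wu] := eqVneq w u.
apply/subsetP => z /shared_setP [uz [w' w'z w'u]].
have ew := own_partner ux wx uz w'z wu w'u; rewrite -ew in w'z.
by apply/shared_setP; split => //; exists u; rewrite // eq_sym.
Qed.

Lemma shared_set_eq u w x : x \in shared_set u -> x \in shared_set w ->
  shared_set u = shared_set w.
Proof.
by move=> xu xw; apply/eqP; rewrite eqEsubset (shared_set_sub xu xw) (shared_set_sub xw xu).
Qed.

Lemma shared_partner u x : x \in shared_set u ->
  exists w, [/\ w \in C, w != u & x \in shared_set w].
Proof.
case/shared_setP => ux [w wx wu]; exists w; split => //; first exact: subsetP (own_sub x) w wx.
by apply/shared_setP; split => //; exists u; rewrite // eq_sym.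
Qed.

Lemma owner_systemP p : p \in owner_system ->
  (exists2 u, u \in C & p = (private_set u, shared_set u)) \/
  (exists2 u, u \in C & p = (shared_set u, set0) /\ shared_set u != set0).
Proof.
case/setUP => /imsetP [u uC ->]; first by left; exists u.
by right; move: uC; rewrite inE => /andP[uC ne]; exists u.
Qed.

Lemma mem_owner_system_private u : u \in C -> (private_set u, shared_set u) \in owner_system.
Proof. by move=> uC; apply/setUP; left; apply/imsetP; exists u. Qed.

Lemma mem_owner_system_shared u : u \in C -> shared_set u != set0 ->
  (shared_set u, set0) \in owner_system.
Proof. by move=> uC ne; apply/setUP; right; apply/imsetP; exists u; rewrite // inE uC ne. Qed.

Lemma owner_system_pairs : set_pair_system owner_system.
Proof.
move=> p /owner_systemP [[u uC ->]|[u _ [-> ne]]] /=; last by rewrite setI0.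
split; first exact: private_set_neq0.
apply/setP => x; rewrite in_setI in_set0; apply/negbTE/andP => -[xp].
by apply/negP; apply: private_shared_disjoint xp.
Qed.

Lemma owner_system_meet p q x : p \in owner_system -> q \in owner_system ->
  x \in p.1 -> x \in q.1 -> p = q.
Proof.
case/owner_systemP => [[u uC ->]|[u uC [-> _]]];
  case/owner_systemP => [[w wC ->]|[w wC [-> _]]] /= xp xq.
- by rewrite (private_set_inj xp xq).
- by rewrite (negbTE (private_shared_disjoint w xp)) in xq.
- by rewrite (negbTE (private_shared_disjoint u xq)) in xp.
- by rewrite (shared_set_eq xp xq).
Qed.

Lemma cover_owner_system : cover [set p.1 | p in owner_system] = [set: X].
Proof.
apply/setP => x; rewrite in_setT /cover; apply/bigcupP.
have /set0Pn [u ux] := own_neq0 x; have uC := subsetP (own_sub x) u ux.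
have [ox|ox] := eqVneq (own x) [set u].
  exists (private_set u); last by rewrite inE ox.
  by apply/imsetP; exists (private_set u, shared_set u); rewrite ?mem_owner_system_private.
have xu : x \in shared_set u by rewrite inE ux ox.
exists (shared_set u) => //; apply/imsetP; exists (shared_set u, set0) => //.
by apply: mem_owner_system_shared => //; apply/set0Pn; exists x.
Qed.

Lemma owner_system_partner p : p \in owner_system -> p.2 != set0 ->
  (p.2, set0) \in owner_system /\
  exists! q, [/\ q \in owner_system, q != p & q.2 = p.2].
Proof.
case/owner_systemP => [[u uC ->]|[u _ [-> _]]] /= ne; last by rewrite eqxx in ne.
split; first exact: mem_owner_system_shared.
have /set0Pn [x xu] := ne; have [w [wC wu xw]] := shared_partner xu.
exists (private_set w, shared_set w); split.
  split; [exact: mem_owner_system_private | | exact: shared_set_eq xw xu].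
  apply: contra_neq wu => -[pw _]; have /set0Pn [y yw] := private_set_neq0 wC.
  by apply: (private_set_inj yw); rewrite -pw.
move=> q [/owner_systemP [[w' w'C ->]|[w' _ [-> _]]] qp /= q2]; last by rewrite -q2 eqxx in ne.
have w'u : w' != u by apply: contra_neq qp => ->.
have /shared_setP [ux _] := xu; have /shared_setP [wx _] := xw.
have /shared_setP [w'x _] : x \in shared_set w' by rewrite q2.
by rewrite (own_partner ux wx ux w'x wu w'u).
Qed.

Theorem polestar_owner_system : polestar_system owner_system.
Proof.
split; [exact: owner_system_pairs | | | exact: owner_system_partner].
- rewrite /partition cover_owner_system eqxx /=; apply/andP; split.
    apply/trivIsetP => _ _ /imsetP[p pS ->] /imsetP[q qS ->] pq.
    rewrite -setI_eq0; apply/set0Pn => -[x /setIP[xp xq]].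
    by rewrite (owner_system_meet pS qS xp xq) eqxx in pq.
  apply/negP => /imsetP [p pS p0]; have [ne _] := owner_system_pairs pS.
  by rewrite -p0 eqxx in ne.
- move=> p q pS qS; apply: contra_neq => pq.
  have [/set0Pn [x xp] _] := owner_system_pairs pS.
  by apply: (owner_system_meet pS qS xp); rewrite -pq.
Qed.

End OwnerSystem.

Section RankedCactus.
Variables (V X : finType) (a : rel V) (rho : V) (phi : X -> V) (r : V -> nat) (i : nat).
Hypothesis acyc : acyclic a.
Hypothesis rho_indeg0 : indeg a rho = 0.
Hypothesis rho_reach : forall v, exists p, path a rho p /\ last rho p = v.
Hypothesis cactus : no_shared_arc a.
Hypothesis labelled : forall v,
  is_leaf a v || is_tree_vertex a v && (outdeg a v == 1) -> v \in codom phi.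
Hypothesis rank_tree : forall u v, a u v -> ~~ is_reticulation a v -> r v < r u.
Hypothesis rank_retic : forall u v, a u v -> is_reticulation a v -> r u = r v.
Hypothesis rank_label : forall x, r (phi x) = 0.

Local Notation Vs := (Vi a r i).

Definition owners (t : V) : {set V} := [set w in Vs | connect a w t].

Lemma in_owners w t : (w \in owners t) = (w \in Vs) && connect a w t.
Proof. by rewrite inE. Qed.

Lemma arc_rank u v : a u v -> r v <= r u.
Proof.
move=> uv; have [/(rank_retic uv)-> //|] := boolP (is_reticulation a v).
by move/(rank_tree uv)/ltnW.
Qed.

Lemma connect_rho v : connect a rho v.
Proof. by have [p [rp <-]] := rho_reach v; apply/connectP; exists p. Qed.

Lemma tree_parent_uniq v p p' : ~~ is_reticulation a v -> a p v -> a p' v -> p = p'.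
Proof.
rewrite /is_reticulation /indeg -leqNgt => /card_le1_eqP le1 pv p'v.
by apply: le1; rewrite inE.
Qed.

Lemma Vi_rank u : u \in Vs -> r u <= i.
Proof. by rewrite inE => /andP[]. Qed.

Lemma Vi_parent_rank u p : u \in Vs -> a p u -> i < r p.
Proof. by rewrite inE => /andP[_ /forallP /(_ p) /implyP]. Qed.

Lemma Vi_cut_arc u p : u \in Vs -> a p u -> cut_arc r i (p, u).
Proof. by move=> uV pu; rewrite /cut_arc /= (Vi_parent_rank uV pu) Vi_rank. Qed.

Lemma Vi_tree u : u \in Vs -> ~~ is_reticulation a u.
Proof.
move=> uV; apply/negP => ret; have /card_gt0P [p] : 0 < indeg a u by apply: leq_trans ret.
rewrite inE => pu; have := Vi_parent_rank uV pu.
by rewrite (rank_retic pu ret) ltnNge Vi_rank.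
Qed.

Lemma Vi_path_rank u A z : u \in Vs -> path a u A -> z \in u :: A -> r z <= i.
Proof. by move=> uV uA /(path_rank arc_rank uA) /leq_trans; apply; apply: Vi_rank. Qed.

Lemma Vi_below_eq v w : r v <= i -> w \in Vs -> connect a v w -> v = w.
Proof.
move=> vi wV /connectP [p vp wl]; have [//|wv] := eqVneq w v.
have [q qw] : exists q, (q, w) \in path_arcs v p by apply: path_arcs_to wv; rewrite wl mem_last.
have [qw' qp _] := path_arcsP vp qw; have := Vi_parent_rank wV qw'.
by rewrite ltnNge (leq_trans (path_rank arc_rank vp qp) vi).
Qed.

Lemma Vi_other_parent u w : u \in Vs -> w \in Vs -> w != u -> exists p, a p u.
Proof.
move=> uV wV wu; have [p [rp pu]] := rho_reach u.
have [ur|nur] := eqVneq u rho.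
  have := Vi_below_eq (Vi_rank uV) wV; rewrite ur connect_rho => /(_ isT) rw.
  by rewrite -rw ur eqxx in wu.
have up : u \in rho :: p by rewrite -pu mem_last.
by have [q /(path_arcsP rp) [qu _ _]] := path_arcs_to up nur; exists q.
Qed.

Lemma rho_Vi : r rho <= i -> rho \in Vs.
Proof.
move=> ri; rewrite inE ri; apply/forallP => q; apply/implyP => qr.
by move/eqP: rho_indeg0; rewrite /indeg cards_eq0 => /eqP/setP/(_ q); rewrite !inE qr.
Qed.

Lemma path_meets_Vi x p : path a x p -> r (last x p) <= i -> i < r x \/ x \in Vs ->
  exists2 w, w \in Vs & w \in x :: p.
Proof.
elim: p x => [|z p IH] x /=.
  by move=> _ xi [ix|xV]; [rewrite ltnNge xi in ix | exists x; rewrite ?mem_head].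
case/andP => xz zp zi [ix|xV]; last by exists x; rewrite ?mem_head.
have [w wV wp] : exists2 w, w \in Vs & w \in z :: p.
  apply: IH zp zi _; have [zi'|] := leqP (r z) i; [right|by left].
  have zt : ~~ is_reticulation a z.
    by apply: contraTN ix => /(rank_retic xz) ->; rewrite -leqNgt.
  rewrite inE zi' /=; apply/forallP => q; apply/implyP => qz.
  by rewrite (tree_parent_uniq zt qz xz).
by exists w; rewrite // in_cons wp orbT.
Qed.

Lemma root_path_meets_Vi p : path a rho p -> r (last rho p) <= i ->
  exists2 w, w \in Vs & w \in rho :: p.
Proof.
move=> rp pi; apply: path_meets_Vi rp pi _.
by have [/rho_Vi|] := leqP (r rho) i; [right|left].
Qed.

Lemma owners_neq0 t : r t <= i -> owners t != set0.
Proof.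
have [p [rp <-]] := rho_reach t => pi; have [w wV wp] := root_path_meets_Vi rp pi.
by apply/set0Pn; exists w; rewrite in_owners wV; case: (mem_path_connect rp wp).
Qed.

Lemma owners_rank t u : u \in owners t -> r t <= i.
Proof. by rewrite in_owners => /andP[/Vi_rank ui /(connect_rank arc_rank) /leq_trans]; apply. Qed.

Lemma owners_Vi u : u \in Vs -> owners u = [set u].
Proof.
move=> uV; apply/setP => w; rewrite in_owners in_set1.
apply/andP/eqP => [[wV wu]|->]; last by rewrite uV connect0.
exact: Vi_below_eq (Vi_rank wV) uV wu.
Qed.

Lemma retic_cycle_through_cut u w pu pw A C q1 q2 m :
  u \in Vs -> w \in Vs -> a pu u -> a pw w ->
  path a u A -> last u A = q1 -> path a w C -> last w C = q2 -> a q1 m -> a q2 m ->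
  (forall z, z \in u :: A -> z \notin w :: C) ->
  exists s p1 p2, [/\ retic_cycle a s p1 p2, (pu, u) \in cycle_arcs s p1 p2,
    (pw, w) \in cycle_arcs s p1 p2, (q1, m) \in cycle_arcs s p1 p2 & i < r s].
Proof.
move=> uV wV puu pww uA lA wC lC q1m q2m disj.
have [R1 [rR1 lR1]] := rho_reach pu; have [R2 [rR2 lR2]] := rho_reach pw.
have rl1 : path a rho (R1 ++ u :: A) by rewrite cat_path rR1 lR1 /= puu uA.
have rl2 : path a rho (R2 ++ w :: C) by rewrite cat_path rR2 lR2 /= pww wC.
have ll1 : last rho (R1 ++ u :: A) = q1 by rewrite last_cat.
have ll2 : last rho (R2 ++ w :: C) = q2 by rewrite last_cat.
have q12 : q1 != q2.
  by rewrite -lA -lC; apply: contraTneq (disj _ (mem_last u A)) => ->; rewrite mem_last.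
have [A0 [s [B [C0 [D [e1 e2 cyc q1mB _]]]]]] :=
  retic_cycle_of_parents rl1 ll1 rl2 ll2 q1m q2m q12.
have above R p z : path a rho R -> last rho R = p -> i < r p -> z \in rho :: R -> i < r z.
  by move=> rR <- ip /(path_rank_last arc_rank rR); apply: leq_trans.
have s1 : s \in (rho :: R1) ++ u :: A by rewrite cat_cons e1 mem_cat mem_head orbT.
have s2 : s \in (rho :: R2) ++ w :: C by rewrite cat_cons e2 mem_cat mem_head orbT.
have sA : s \notin u :: A.
  apply/negP => sA; move: s2; rewrite mem_cat (negbTE (disj s sA)) orbF.
  move/(above _ _ _ rR2 lR2 (Vi_parent_rank wV pww)).
  by rewrite ltnNge (Vi_path_rank uV uA sA).
have sC : s \notin w :: C.
  apply/negP => sC; move: s1; rewrite mem_cat orbC; case/orP => [/disj|]; first by rewrite sC.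
  move/(above _ _ _ rR1 lR1 (Vi_parent_rank uV puu)).
  by rewrite ltnNge (Vi_path_rank wV wC sC).
exists s, (rcons B m), (rcons D m); split => //.
- by rewrite /cycle_arcs mem_cat (mem_path_arcs_rcons m e1 sA lR1).
- by rewrite /cycle_arcs mem_cat (mem_path_arcs_rcons m e2 sC lR2) orbT.
- by rewrite /cycle_arcs mem_cat q1mB.
- move: s1; rewrite mem_cat (negbTE sA) orbF.
  exact: above _ _ _ rR1 lR1 (Vi_parent_rank uV puu).
Qed.

Lemma owners_retic_cycle u w t : u \in owners t -> w \in owners t -> w != u ->
  exists s p1 p2 pu pw, [/\ retic_cycle a s p1 p2, a pu u, a pw w,
    (pu, u) \in cycle_arcs s p1 p2 & (pw, w) \in cycle_arcs s p1 p2].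
Proof.
rewrite !in_owners => /andP[uV /connectP [P uP lP]] /andP[wV /connectP [P' wP' lP']] wu.
have nu : u \notin w :: P'.
  apply/negP => /(mem_path_connect wP') [wu' _].
  by rewrite (Vi_below_eq (Vi_rank wV) uV wu') eqxx in wu.
have nw : w \notin u :: P.
  apply/negP => /(mem_path_connect uP) [uw _].
  by rewrite (Vi_below_eq (Vi_rank uV) wV uw) eqxx in wu.
have [A [C [q1 [q2 [m [[uA lA wC lC] [q1m q2m disj]]]]]]] :=
  paths_first_meet uP (esym lP) wP' (esym lP') nu nw.
have [pu puu] := Vi_other_parent uV wV wu.
have [pw pww] : exists pw, a pw w by apply: Vi_other_parent wV uV _; rewrite eq_sym.
have [s [p1 [p2 [cyc h1 h2 _ _]]]] :=
  retic_cycle_through_cut uV wV puu pww uA lA wC lC q1m q2m disj.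
by exists s, p1, p2, pu, pw.
Qed.

Lemma Vi_parent_cycle_arcs u pu pu' s p1 p2 s' q1 q2 : u \in Vs -> a pu u -> a pu' u ->
  retic_cycle a s p1 p2 -> retic_cycle a s' q1 q2 ->
  (pu, u) \in cycle_arcs s p1 p2 -> (pu', u) \in cycle_arcs s' q1 q2 ->
  cycle_arcs s p1 p2 =i cycle_arcs s' q1 q2.
Proof.
move=> uV puu pu'u cyc cyc' e e'; rewrite (tree_parent_uniq (Vi_tree uV) puu pu'u) in e.
by apply: cactus cyc cyc' _; exists (pu', u).
Qed.

Lemma owners_partner t1 t2 u w1 w2 : u \in owners t1 -> w1 \in owners t1 ->
  u \in owners t2 -> w2 \in owners t2 -> w1 != u -> w2 != u -> w1 = w2.
Proof.
move=> ut1 w1t1 ut2 w2t2 w1u w2u.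
have [s [p1 [p2 [pu [pw1 [cyc puu pw1w1 e1 f1]]]]]] := owners_retic_cycle ut1 w1t1 w1u.
have [s' [q1 [q2 [pu' [pw2 [cyc' pu'u pw2w2 e2 f2]]]]]] := owners_retic_cycle ut2 w2t2 w2u.
have [uV w1V w2V] : [/\ u \in Vs, w1 \in Vs & w2 \in Vs].
  by move: ut1 w1t1 w2t2; rewrite !in_owners => /andP[-> _] /andP[-> _] /andP[-> _].
rewrite -(Vi_parent_cycle_arcs uV puu pu'u cyc cyc' e1 e2) in f2.
have [| |//] := retic_cycle_cut_arcs arc_rank cyc (Vi_cut_arc uV puu)
  (Vi_cut_arc w1V pw1w1) (Vi_cut_arc w2V pw2w2) e1 f1 f2 => /= e.
- by rewrite e eqxx in w1u.
- by rewrite e eqxx in w2u.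
Qed.

Lemma private_rank u y : owners y = [set u] -> r y <= i.
Proof. by move=> yu; apply: (@owners_rank _ u); rewrite yu set11. Qed.

Lemma private_exit_cycle u y c : u \in Vs -> owners y = [set u] -> a y c ->
  owners c != [set u] ->
  exists s p1 p2 pu, [/\ retic_cycle a s p1 p2, a pu u, (pu, u) \in cycle_arcs s p1 p2,
    (y, c) \in cycle_arcs s p1 p2 & i < r s].
Proof.
move=> uV yu yc cu.
have ry := private_rank yu.
have : u \in owners y by rewrite yu set11.
rewrite in_owners uV => /connectP [A uA yA].
have uc : u \in owners c.
  by rewrite in_owners uV (connect_trans _ (connect1 yc)) //; apply/connectP; exists A.
move: cu; rewrite eqEsubset sub1set uc andbT => /subsetPn [w].
rewrite in_owners in_set1 => /andP[wV /connectP [C' wC' cC']] wu.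
case/lastP: C' wC' cC' => [_ /= cw|C c'].
  by rewrite cw in yc; move: (Vi_parent_rank wV yc); rewrite ltnNge ry.
rewrite rcons_path last_rcons => /andP[wC c'c] cc'; subst c'.
have disj z : z \in u :: A -> z \notin w :: C.
  move=> zA; apply/negP => zC.
  have [wz _] := mem_path_connect wC zC; have [_ zy] := mem_path_connect uA zA.
  have : w \in owners y by rewrite in_owners wV yA (connect_trans wz zy).
  by rewrite yu in_set1 (negbTE wu).
have [pu puu] := Vi_other_parent uV wV wu.
have [pw pww] : exists pw, a pw w by apply: Vi_other_parent wV uV _; rewrite eq_sym.
have [s [p1 [p2 [cyc e _ f rs]]]] :=
  retic_cycle_through_cut uV wV puu pww uA (esym yA) wC erefl yc c'c disj.
by exists s, p1, p2, pu.
Qed.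

Lemma private_exits_eq u y c1 c2 : u \in Vs -> owners y = [set u] -> a y c1 -> a y c2 ->
  owners c1 != [set u] -> owners c2 != [set u] -> c1 = c2.
Proof.
move=> uV yu yc1 yc2 c1u c2u.
have [s [p1 [p2 [pu [cyc puu e1 f1 rs]]]]] := private_exit_cycle uV yu yc1 c1u.
have [s' [q1 [q2 [pu' [cyc' pu'u e2 f2 _]]]]] := private_exit_cycle uV yu yc2 c2u.
rewrite -(Vi_parent_cycle_arcs uV puu pu'u cyc cyc' e1 e2) in f2.
apply/eqP; apply: contraTT rs => c12; rewrite -(retic_cycle_fork acyc cyc f1 f2 c12).
by rewrite -leqNgt (private_rank yu).
Qed.

Lemma retic_cycle_into_reticulation y q : is_reticulation a y -> a q y ->
  exists s p1 p2, [/\ retic_cycle a s p1 p2, last s p1 = y & (q, y) \in cycle_arcs s p1 p2].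
Proof.
rewrite /is_reticulation /indeg => /card_gt1P [x1 [x2 [x1y x2y x12]]] qy.
rewrite !inE in x1y x2y.
have [q' q'y qq'] : exists2 q', a q' y & q != q'.
  by have [->|qx1] := eqVneq q x1; [exists x2 | exists x1].
have [l1 [rl1 ll1]] := rho_reach q; have [l2 [rl2 ll2]] := rho_reach q'.
have [_ [s [B [_ [D [_ _ cyc qyB _]]]]]] := retic_cycle_of_parents rl1 ll1 rl2 ll2 qy q'y qq'.
by exists s, (rcons B y), (rcons D y); rewrite last_rcons /cycle_arcs mem_cat qyB.
Qed.

Lemma private_exit_tree u y c : u \in Vs -> owners y = [set u] -> a y c ->
  owners c != [set u] -> ~~ is_reticulation a y.
Proof.
move=> uV yu yc cu; apply/negP => ret.
have [s [p1 [p2 [pu [cyc _ _ f rs]]]]] := private_exit_cycle uV yu yc cu.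
have ys : y != s.
  by apply: contraTneq rs => <-; rewrite -leqNgt (private_rank yu).
have [q qy e] := cycle_arcs_pred cyc f ys.
have [s' [q1 [q2 [cyc' ly e']]]] := retic_cycle_into_reticulation ret qy.
have same : cycle_arcs s' q1 q2 =i cycle_arcs s p1 p2 by apply: cactus cyc' cyc _; exists (q, y).
by have := retic_cycle_sink_no_arc acyc c cyc'; rewrite ly same f.
Qed.

Lemma Vi_private_label u : u \in Vs -> exists x, owners (phi x) = [set u].
Proof.
move=> uV; have uu : owners u == [set u] by rewrite owners_Vi.
have [y /eqP yu ymin] :=
  @arg_minnP _ u (fun y => owners y == [set u]) (fun y => #|[set z | connect a y z]|) uu.
have exits c : a y c -> owners c != [set u].
  move=> yc; apply/negP => /ymin /=.
  by rewrite leqNgt (connect_card_lt acyc yc).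
have out_le1 : outdeg a y <= 1.
  apply/card_le1_eqP => c1 c2; rewrite !inE => yc1 yc2.
  exact: private_exits_eq uV yu yc2 yc1 (exits _ yc2) (exits _ yc1).
have /codomP [x yx] : y \in codom phi.
  apply: labelled; rewrite /is_leaf /is_tree_vertex.
  have [-> //|out_pos] := posnP (outdeg a y).
  have /card_gt0P [c] := out_pos; rewrite inE => yc.
  have := private_exit_tree uV yu yc (exits _ yc); rewrite /is_reticulation -ltnNge ltnS => ->.
  by rewrite eqn_leq out_le1 out_pos.
by exists x; rewrite -yx.
Qed.

Lemma descendantE t v : descendant a rho t v <-> connect a v t.
Proof.
split=> [[p [[rp <-] vp]]|/connectP [q vq ->]]; first by case: (mem_path_connect rp vp).
have [p [rp pv]] := rho_reach v; exists (p ++ q); split.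
  by split; rewrite ?cat_path ?rp ?pv ?vq // last_cat pv.
by rewrite -cat_cons mem_cat -pv mem_last.
Qed.

Lemma strict_descendantE t v : v \in Vs ->
  strict_descendant a rho t v <-> owners t = [set v].
Proof.
move=> vV; split => [[/descendantE vt on_paths]|tv].
  apply/setP => w; rewrite in_owners in_set1.
  apply/andP/eqP => [[wV /connectP [q wq tq]]|->]; last by [].
  have [p [rp pw]] := rho_reach w.
  have : v \in rho :: p ++ q.
    by apply: on_paths; split; rewrite ?cat_path ?rp ?pw ?wq // last_cat pw tq.
  rewrite -cat_cons mem_cat => /orP[vp|vq].
    have [_] := mem_path_connect rp vp; rewrite pw => vw.
    exact/esym/(Vi_below_eq (Vi_rank vV) wV vw).
  have vwq : v \in w :: q by rewrite in_cons vq orbT.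
  have [wv _] := mem_path_connect wq vwq.
  exact: Vi_below_eq (Vi_rank wV) vV wv.
have : v \in owners t by rewrite tv set11.
rewrite in_owners vV /= => vt; split=> [|p [rp pt]]; first exact/descendantE.
have [|w wV wp] := root_path_meets_Vi rp.
  by rewrite pt (leq_trans (connect_rank arc_rank vt) (Vi_rank vV)).
have [_] := mem_path_connect rp wp; rewrite pt => wt.
have : w \in owners t by rewrite in_owners wV.
by rewrite tv in_set1 => /eqP <-.
Qed.

Lemma non_strict_descendantE t v : v \in Vs ->
  non_strict_descendant a rho t v <-> (v \in owners t) && (owners t != [set v]).
Proof.
move=> vV; rewrite in_owners vV /=; split.
  by case=> /descendantE -> ns; apply/eqP => tv; apply/ns/(strict_descendantE t vV).
case/andP => vt tv; split; first exact/descendantE.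
by move/(strict_descendantE t vV) => tv'; rewrite tv' eqxx in tv.
Qed.

Local Notation own := (fun x => owners (phi x)).

Lemma SsetE u : u \in Vs -> Sset a rho phi u = private_set own u.
Proof.
move=> uV; apply/setP => x; rewrite [x \in Sset _ _ _ _]inE [x \in private_set _ _]inE.
by apply/asboolP/eqP => /(strict_descendantE _ uV).
Qed.

Lemma HsetE u : u \in Vs -> Hset a rho phi u = shared_set own u.
Proof.
move=> uV; apply/setP => x; rewrite [x \in Hset _ _ _ _]inE [x \in shared_set _ _]inE.
by apply/asboolP/idP => /(non_strict_descendantE _ uV).
Qed.

Lemma Sys_iE : Sys_i a rho phi r i = owner_system Vs own.
Proof.
rewrite /Sys_i /owner_system; congr (_ :|: _).
  by apply: eq_in_imset => u uV; rewrite SsetE ?HsetE.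
have -> : [set u in Vs | Hset a rho phi u != set0] = [set u in Vs | shared_set own u != set0].
  by apply: eq_finset => u; case uV: (u \in Vs); rewrite //= HsetE.
by apply: eq_in_imset => u; rewrite in_set => /andP[uV _]; rewrite HsetE.
Qed.

Theorem polestar_Sys_i : polestar_system (Sys_i a rho phi r i).
Proof.
rewrite Sys_iE; apply: polestar_owner_system.
- by move=> x; apply/subsetP => w; rewrite in_owners => /andP[].
- by move=> x; apply: owners_neq0; rewrite rank_label.
- exact: Vi_private_label.
- by move=> x y u w w'; apply: owners_partner.
Qed.

End RankedCactus.

Theorem mainTheorem5 (V X : finType) (a : rel V) (rho : V) (phi : X -> V)
    (r : V -> nat) :
  0 < #|X| ->
  is_X_cactus a rho phi ->
  is_ranking a phi r ->
  forall i : nat, i <= sigma r -> polestar_system (Sys_i a rho phi r i).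
Proof.
move=> _ [[acyc [rho_indeg0 rho_reach]] _ cactus labelled] [rank_label rank_tree rank_retic _].
move=> i _; exact: polestar_Sys_i.
Qed.
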